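(* Let $g\in\mathscr{B}$ and, for $\lambda\in\mathbb{D}\setminus\{0\}$ and $\gamma>0$, let $f_{\gamma,\lambda}(z)=\dfrac{z}{(1-\bar\lambda z)^\gamma}$, $z\in\mathbb{D}$. Then: (a) For every $k\in\mathbb{N}$ and $t\in[0,1]$, \[ |T_g^kf_{\gamma,\lambda}(t\lambda)|\le\frac{\|g\|_{\mathscr{B}}^k}{|\lambda|^k\gamma^k(1-t|\lambda|^2)^\gamma}. \] (b) If $a_0,\dots,a_n\in\mathbb{C}$ and $\gamma|\lambda|>\|g\|_{\mathscr{B}}$, then \[ \Bigl|\sum_{k=0}^na_kT_g^kf_{\gamma,\lambda}(\lambda)\Bigr|\le|a_0|\frac{|\lambda|}{(1-|\lambda|^2)^\gamma}+\Bigl(\sum_{k=1}^n|a_k|\Bigr)\frac{\|g\|_{\mathscr{B}}}{|\lambda|\gamma(1-|\lambda|^2)^\gamma}. \]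
   Context: $\mathbb{D}$ is the unit disc. $\mathscr{B}$ is the Bloch space of analytic $g$ on $\mathbb{D}$ with $\|g\|_{\mathscr{B}}=\sup_{z\in\mathbb{D}}(1-|z|^2)|g'(z)|<\infty$. $T_gf(z)=\int_0^zf(\zeta)g'(\zeta)\,d\zeta$, $T_g^0$ is the identity. The power $(1-\bar\lambda z)^\gamma$ is defined with the principal branch of the logarithm. *)

From Stdlib Require Import Reals.
From Coquelicot Require Import Coquelicot.

Open Scope R_scope.

(* Principal argument Arg w in (-PI, PI] (the usual atan2). *)
Definition Arg (w : C) : R :=
  let x := fst w in let y := snd w in
  match Rlt_dec 0 x with
  | left _ => atan (y / x)
  | right _ =>
    match Rlt_dec 0 y with
    | left _ => PI / 2 - atan (x / y)
    | right _ =>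
      match Rlt_dec y 0 with
      | left _ => - (PI / 2) - atan (x / y)
      | right _ => match Rlt_dec x 0 with left _ => PI | right _ => 0 end
      end
    end
  end.

(* Principal power w^gamma = exp(gamma * Log w), Log the principal logarithm
   Log w = ln|w| + i Arg w  (w <> 0). *)
Definition cpow (w : C) (gamma : R) : C :=
  match Req_EM_T (Cmod w) 0 with
  | left _ => RtoC 0
  | right _ =>
    Cmult (RtoC (exp (gamma * ln (Cmod w))))
          (cos (gamma * Arg w), sin (gamma * Arg w))
  end.

Definition inD (z : C) : Prop := Cmod z < 1.

Definition in_Bloch (g' : C -> C) : Prop :=
  exists M : R, forall z : C, inD z -> (1 - Cmod z ^ 2) * Cmod (g' z) <= M.

Definition bloch_norm (g' : C -> C) : R :=
  real (Lub_Rbar (fun r => exists z : C, inD z /\ r = (1 - Cmod z ^ 2) * Cmod (g' z))).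

(* T_g f (z) = int_0^z f(zeta) g'(zeta) dzeta, along the segment [0,z]:
   = int_0^1 f(s z) g'(s z) z ds. *)
Definition Tg (g' : C -> C) (f : C -> C) (z : C) : C :=
  RInt (V := C_R_CompleteNormedModule)
       (fun s : R => Cmult (Cmult (f (Cmult (RtoC s) z)) (g' (Cmult (RtoC s) z))) z) 0 1.

Fixpoint Tgk (g' : C -> C) (k : nat) (f : C -> C) : C -> C :=
  match k with
  | O => f
  | S k' => Tg g' (Tgk g' k' f)
  end.

Definition f_gl (gamma : R) (lam : C) (z : C) : C :=
  Cdiv z (cpow (Cminus (RtoC 1) (Cmult (Cconj lam) z)) gamma).

From Stdlib Require Import Reals Lra Lia Classical.
From Coquelicot Require Import Coquelicot.
Open Scope R_scope.

(* Along the ray z = s lam the Bloch condition gives |g'(s lam)| <= ||g|| / (1 - s|lam|^2).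
   Hence if |F(s lam)| <= B (1 - s|lam|^2)^(-gamma) on the ray, integrating the
   majorant c (1 - u c)^(-gamma-1), c = t|lam|^2, in closed form shows that T_g F
   satisfies the same bound with B replaced by B ||g|| / (gamma |lam|); iterating from
   B = 1 gives (a).  When gamma |lam| > ||g|| the factors (||g|| / (gamma |lam|))^k,
   k >= 1, are at most their first power, and (b) follows from the triangle inequality. *)

Lemma real_Lub_Rbar_ub (E : R -> Prop) (M : R) :
  (forall x, E x -> x <= M) -> forall x, E x -> x <= real (Lub_Rbar E).
Proof.
  intros HM x Ex.
  destruct (Lub_Rbar_correct E) as [Hub Hlub].
  assert (HleM : Rbar_le (Lub_Rbar E) M) by (apply Hlub; exact HM).
  specialize (Hub x Ex).
  destruct (Lub_Rbar E); simpl in *; easy.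
Qed.

Lemma real_Lub_Rbar_full (E : R -> Prop) : (forall x, E x) -> real (Lub_Rbar E) = 0.
Proof.
  intros HE. destruct (Lub_Rbar_correct E) as [Hub _].
  destruct (Lub_Rbar E) as [r| |]; try reflexivity.
  specialize (Hub (r + 1) (HE _)). simpl in Hub. lra.
Qed.

Lemma bloch_norm_ub (g' : C -> C) :
  in_Bloch g' -> forall z, inD z -> (1 - Cmod z ^ 2) * Cmod (g' z) <= bloch_norm g'.
Proof.
  intros [M HM] z Hz. apply (real_Lub_Rbar_ub _ M).
  - intros x [w [Hw ->]]. exact (HM w Hw).
  - exists z. split; [exact Hz | reflexivity].
Qed.

Lemma bloch_norm_ge0 (g' : C -> C) : in_Bloch g' -> 0 <= bloch_norm g'.
Proof.
  intros HB.
  assert (H0 : inD 0%C) by (unfold inD; rewrite Cmod_0; lra).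
  pose proof (bloch_norm_ub g' HB 0%C H0) as Hub.
  pose proof (Cmod_ge_0 (g' 0%C)).
  rewrite Cmod_0 in Hub. nra.
Qed.

Lemma Cmod_ray (t : R) (lam : C) : 0 <= t -> Cmod (t * lam)%C = t * Cmod lam.
Proof. intros Ht. rewrite Cmod_mult, Cmod_R, Rabs_pos_eq; auto. Qed.

Lemma bloch_deriv_ray_bound (g' : C -> C) (lam : C) (s : R) :
  in_Bloch g' -> inD lam -> 0 <= s <= 1 ->
  Cmod (g' (s * lam)%C) <= bloch_norm g' / (1 - s * Cmod lam ^ 2).
Proof.
  intros HB HlamD Hs. unfold inD in HlamD.
  pose proof (Cmod_ge_0 lam) as HL.
  assert (Hd : 0 < 1 - s * Cmod lam ^ 2) by nra.
  assert (Hz : inD (s * lam)%C) by (unfold inD; rewrite Cmod_ray by lra; nra).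
  pose proof (bloch_norm_ub g' HB _ Hz) as Hub.
  rewrite Cmod_ray in Hub by lra.
  pose proof (Cmod_ge_0 (g' (s * lam)%C)).
  apply Rmult_le_reg_r with (1 - s * Cmod lam ^ 2); [exact Hd|].
  unfold Rdiv. rewrite Rmult_assoc, Rinv_l, Rmult_1_r by lra.
  assert (0 <= s * Cmod lam ^ 2 * (1 - s)) by (apply Rmult_le_pos; nra).
  nra.
Qed.

Lemma Rpower_gt0 (x y : R) : 0 < Rpower x y.
Proof. apply exp_pos. Qed.

Lemma cpow_RtoC_pos (x gamma : R) : 0 < x -> cpow (RtoC x) gamma = RtoC (Rpower x gamma).
Proof.
  intros Hx. unfold cpow. rewrite Cmod_R, Rabs_pos_eq by lra.
  destruct (Req_EM_T x 0) as [e|_]; [lra|].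
  unfold Arg. simpl. destruct (Rlt_dec 0 x) as [_|n]; [|lra].
  unfold Rdiv. rewrite Rmult_0_l, atan_0, Rmult_0_r, cos_0, sin_0.
  unfold Rpower, RtoC, Cmult. simpl. f_equal; ring.
Qed.

Lemma Cmod_f_gl_ray (gamma t : R) (lam : C) : 0 <= t <= 1 -> inD lam ->
  Cmod (f_gl gamma lam (t * lam)%C) = t * Cmod lam / Rpower (1 - t * Cmod lam ^ 2) gamma.
Proof.
  intros Ht HlamD. unfold inD in HlamD. unfold f_gl.
  pose proof (Cmod_ge_0 lam).
  assert (Hpos : 0 < 1 - t * Cmod lam ^ 2) by nra.
  replace (Cminus 1 (Cmult (Cconj lam) (t * lam)%C)) with (RtoC (1 - t * Cmod lam ^ 2)).
  2:{ rewrite Cmod2_alt. destruct lam as [a b].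
      unfold Cminus, Cmult, Cconj, RtoC, Cplus, Copp. simpl. f_equal; ring. }
  pose proof (Rpower_gt0 (1 - t * Cmod lam ^ 2) gamma).
  rewrite cpow_RtoC_pos by exact Hpos.
  rewrite Cmod_div by (apply Cmod_gt_0; rewrite Cmod_R, Rabs_pos_eq; lra).
  rewrite Cmod_mult, !Cmod_R, !Rabs_pos_eq by lra.
  reflexivity.
Qed.

Lemma norm_C_R (z : C) : norm (K := R_AbsRing) (V := C_R_NormedModule) z = Cmod z.
Proof.
  destruct z as [a b]. unfold Cmod. simpl.
  change (sqrt (Rabs a ^ 2 + Rabs b ^ 2) = sqrt (a * (a * 1) + b * (b * 1))).
  rewrite !pow2_abs. reflexivity.
Qed.

Lemma RInt_C_not_ex (f : R -> C) (a b : R) :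
  ~ ex_RInt (V := C_R_CompleteNormedModule) f a b ->
  RInt (V := C_R_CompleteNormedModule) f a b = RtoC 0.
Proof.
  intros Hnex. unfold RInt, iota.
  change (C_complete_lim (fun A : C -> Prop =>
            forall x : C, is_RInt (V := C_R_CompleteNormedModule) f a b x -> A x) = RtoC 0).
  unfold C_complete_lim, R_complete_lim, RtoC.
  f_equal; apply real_Lub_Rbar_full; intros x y Hy; exfalso; apply Hnex; exists y; exact Hy.
Qed.

Lemma is_RInt_ray_majorant (c gamma : R) : 0 <= c < 1 -> 0 < gamma ->
  is_RInt (fun u => c * Rpower (1 - u * c) (- gamma) / (1 - u * c)) 0 1
    ((Rpower (1 - c) (- gamma) - 1) / gamma).
Proof.
  intros Hc Hgamma.
  set (F := fun u => Rpower (1 - u * c) (- gamma) / gamma).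
  replace ((Rpower (1 - c) (- gamma) - 1) / gamma) with (minus (F 1) (F 0)).
  2:{ unfold F, minus, plus, opp. simpl.
      rewrite Rmult_0_l, Rminus_0_r, Rmult_1_l.
      unfold Rpower at 2. rewrite ln_1, Rmult_0_r, exp_0. field. lra. }
  apply (is_RInt_derive (V := R_CompleteNormedModule) F).
  - intros u Hu. rewrite Rmin_left, Rmax_right in Hu by lra.
    assert (0 < 1 - u * c) by nra.
    unfold F, Rpower. auto_derive; [lra|]. unfold Rminus. field. lra.
  - intros u Hu. rewrite Rmin_left, Rmax_right in Hu by lra.
    assert (0 < 1 - u * c) by nra.
    apply (ex_derive_continuous (K := R_AbsRing) (V := R_NormedModule)).
    unfold Rpower. auto_derive. lra.
Qed.

Section RayBound.

Variables (g' F : C -> C) (gamma B : R) (lam : C).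
Hypotheses (HB : in_Bloch g') (Hgamma : 0 < gamma) (Hlam0 : lam <> RtoC 0)
  (HlamD : inD lam) (HB0 : 0 <= B)
  (HF : forall s, 0 <= s <= 1 ->
          Cmod (F (s * lam)%C) <= B / Rpower (1 - s * Cmod lam ^ 2) gamma).

Lemma Tg_ray_integrand_bound (t u : R) : 0 <= t <= 1 -> 0 <= u <= 1 ->
  Cmod (Cmult (Cmult (F (u * (t * lam))%C) (g' (u * (t * lam))%C)) (t * lam)%C)
    <= bloch_norm g' * B / Cmod lam
       * (t * Cmod lam ^ 2 * Rpower (1 - u * (t * Cmod lam ^ 2)) (- gamma)
          / (1 - u * (t * Cmod lam ^ 2))).
Proof.
  intros Ht Hu.
  pose proof HlamD as HL1. unfold inD in HL1.
  assert (HL : 0 < Cmod lam) by (apply Cmod_gt_0; exact Hlam0).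
  set (N := bloch_norm g') in *. set (L := Cmod lam) in *.
  rewrite (Cmult_assoc (RtoC u)), <- RtoC_mult, !Cmod_mult, Cmod_R, Rabs_pos_eq by lra.
  assert (Hut : 0 <= u * t <= 1) by nra.
  assert (Hd : 0 < 1 - u * t * L ^ 2) by nra.
  assert (HPu : 0 < Rpower (1 - u * t * L ^ 2) gamma) by apply Rpower_gt0.
  apply Rle_trans with
    (B / Rpower (1 - u * t * L ^ 2) gamma * (N / (1 - u * t * L ^ 2)) * (t * L)).
  - apply Rmult_le_compat_r; [nra|].
    apply Rmult_le_compat; [apply Cmod_ge_0 | apply Cmod_ge_0 | apply HF |
                            apply bloch_deriv_ray_bound]; assumption.
  - right. replace (u * (t * L ^ 2)) with (u * t * L ^ 2) by ring.
    rewrite Rpower_Ropp. field. lra.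
Qed.

Lemma Tg_ray_bound (t : R) : 0 <= t <= 1 ->
  Cmod (Tg g' F (t * lam)%C)
    <= bloch_norm g' * B / (Cmod lam * gamma) / Rpower (1 - t * Cmod lam ^ 2) gamma.
Proof.
  intros Ht.
  pose proof (bloch_norm_ge0 g' HB) as HN.
  pose proof HlamD as HL1. unfold inD in HL1.
  assert (HL : 0 < Cmod lam) by (apply Cmod_gt_0; exact Hlam0).
  set (N := bloch_norm g') in *. set (L := Cmod lam) in *.
  set (c := t * L ^ 2).
  assert (Hc : 0 <= c < 1) by (unfold c; nra).
  assert (HP : 0 < Rpower (1 - c) gamma) by apply Rpower_gt0.
  assert (HK : 0 <= N * B / L).
  { apply Rmult_le_pos; [nra | left; apply Rinv_0_lt_compat; exact HL]. }
  unfold Tg.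
  set (h := fun s : R =>
         Cmult (Cmult (F (s * (t * lam))%C) (g' (s * (t * lam))%C)) (t * lam)%C).
  (* Integrability of h is never established: without it RInt is the junk value 0. *)
  destruct (classic (ex_RInt (V := C_R_CompleteNormedModule) h 0 1)) as [Hex | Hnex].
  2:{ rewrite RInt_C_not_ex, Cmod_0 by exact Hnex.
      apply Rmult_le_pos; [apply Rmult_le_pos|]; [nra | |];
        left; apply Rinv_0_lt_compat; nra. }
  apply Rle_trans with (N * B / L * ((Rpower (1 - c) (- gamma) - 1) / gamma)).
  - rewrite <- norm_C_R.
    apply (norm_RInt_le h
             (fun u => N * B / L * (c * Rpower (1 - u * c) (- gamma) / (1 - u * c))) 0 1).
    + lra.
    + intros u Hu. rewrite norm_C_R. exact (Tg_ray_integrand_bound t u Ht Hu).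
    + exact (RInt_correct (V := C_R_CompleteNormedModule) h 0 1 Hex).
    + apply (is_RInt_scal (V := R_NormedModule)). apply is_RInt_ray_majorant; assumption.
  - rewrite Rpower_Ropp.
    apply Rle_trans with (N * B / L * (/ Rpower (1 - c) gamma / gamma)).
    + apply Rmult_le_compat_l; [exact HK|]. unfold Rdiv. apply Rmult_le_compat_r.
      * left. apply Rinv_0_lt_compat. exact Hgamma.
      * lra.
    + right. field. lra.
Qed.

End RayBound.

Lemma Tgk_f_gl_ray_bound (g' : C -> C) (gamma : R) (lam : C) :
  in_Bloch g' -> 0 < gamma -> lam <> RtoC 0 -> inD lam ->
  forall (k : nat) (t : R), 0 <= t <= 1 ->
  Cmod (Tgk g' k (f_gl gamma lam) (t * lam)%C)
    <= bloch_norm g' ^ k / (Cmod lam ^ k * gamma ^ k * Rpower (1 - t * Cmod lam ^ 2) gamma).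
Proof.
  intros HB Hgamma Hlam0 HlamD.
  pose proof (bloch_norm_ge0 g' HB) as HN.
  assert (HL : 0 < Cmod lam) by (apply Cmod_gt_0; exact Hlam0).
  pose proof HlamD as HL1. unfold inD in HL1.
  set (N := bloch_norm g') in *. set (L := Cmod lam) in *.
  induction k as [|k IH]; intros t Ht.
  - cbn [Tgk]. rewrite Cmod_f_gl_ray by assumption.
    pose proof (Rpower_gt0 (1 - t * L ^ 2) gamma).
    rewrite !pow_O, !Rmult_1_l. unfold Rdiv.
    fold L. apply Rmult_le_compat_r; [left; apply Rinv_0_lt_compat; assumption | nra].
  - assert (HLk : 0 < L ^ k) by (apply pow_lt; exact HL).
    assert (Hgk : 0 < gamma ^ k) by (apply pow_lt; exact Hgamma).
    assert (HB0 : 0 <= N ^ k / (L ^ k * gamma ^ k)).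
    { apply Rmult_le_pos; [apply pow_le; exact HN | left; apply Rinv_0_lt_compat; nra]. }
    simpl Tgk.
    eapply Rle_trans.
    + apply (Tg_ray_bound g' _ gamma _ lam HB Hgamma Hlam0 HlamD HB0); [|exact Ht].
      intros s Hs. eapply Rle_trans; [exact (IH s Hs)|].
      right. fold L. field. pose proof (Rpower_gt0 (1 - s * L ^ 2) gamma). lra.
    + right. pose proof (Rpower_gt0 (1 - t * L ^ 2) gamma). fold N L.
      rewrite <- !(tech_pow_Rmult _ k). field. repeat split; lra.
Qed.

Lemma pow_succ_ratio_le (N M P : R) (m : nat) : 0 <= N <= M -> 0 < P ->
  N ^ S m / (M ^ S m * P) <= N / (M * P).
Proof.
  intros HNM HP.
  destruct (Req_dec N 0) as [->|HN0].
  { simpl. rewrite !Rmult_0_l. unfold Rdiv. rewrite !Rmult_0_l. lra. }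
  assert (HM : 0 < M) by lra.
  assert (HMm : 0 < M ^ m) by (apply pow_lt; exact HM).
  assert (Hratio : N ^ m / M ^ m <= 1).
  { apply Rmult_le_reg_r with (M ^ m); [exact HMm|].
    unfold Rdiv. rewrite Rmult_assoc, Rinv_l, Rmult_1_r, Rmult_1_l by lra.
    apply pow_incr. exact HNM. }
  assert (Hbase : 0 <= N / (M * P)).
  { apply Rmult_le_pos; [lra | left; apply Rinv_0_lt_compat, Rmult_lt_0_compat; assumption]. }
  replace (N ^ S m / (M ^ S m * P)) with (N / (M * P) * (N ^ m / M ^ m))
    by (simpl; field; lra).
  rewrite <- (Rmult_1_r (N / (M * P))) at 2.
  apply Rmult_le_compat_l; assumption.
Qed.

Lemma Cmod_sum_n_mult_le (a b : nat -> C) (C0 C1 : R) (n : nat) :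
  Cmod (b 0%nat) <= C0 -> (forall k, (1 <= k)%nat -> Cmod (b k) <= C1) ->
  Cmod (sum_n (G := C_AbelianGroup) (fun k => Cmult (a k) (b k)) n)
    <= Cmod (a 0%nat) * C0 + sum_n_m (G := R_AbelianGroup) (fun k => Cmod (a k)) 1 n * C1.
Proof.
  intros Hb0 Hb. induction n as [|n IH].
  - rewrite sum_O, sum_n_m_zero by lia. rewrite Cmod_mult.
    change (zero (G := R_AbelianGroup)) with 0.
    pose proof (Cmod_ge_0 (a 0%nat)). nra.
  - rewrite sum_Sn, sum_n_Sm by lia.
    change (Cmod (Cplus (sum_n (G := C_AbelianGroup) (fun k => Cmult (a k) (b k)) n)
                        (Cmult (a (S n)) (b (S n))))
            <= Cmod (a 0%nat) * C0
               + (sum_n_m (G := R_AbelianGroup) (fun k => Cmod (a k)) 1 n + Cmod (a (S n))) * C1).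
    eapply Rle_trans; [apply Cmod_triangle|].
    rewrite Cmod_mult.
    pose proof (Cmod_ge_0 (a (S n))) as Ha.
    pose proof (Rmult_le_compat_l _ _ _ Ha (Hb (S n) ltac:(lia))). nra.
Qed.

Lemma Tgk_f_gl_succ_bound (g' : C -> C) (gamma : R) (lam : C) :
  in_Bloch g' -> 0 < gamma -> lam <> RtoC 0 -> inD lam ->
  gamma * Cmod lam > bloch_norm g' ->
  forall k, (1 <= k)%nat ->
  Cmod (Tgk g' k (f_gl gamma lam) lam)
    <= bloch_norm g' / (Cmod lam * gamma * Rpower (1 - Cmod lam ^ 2) gamma).
Proof.
  intros HB Hgamma Hlam0 HlamD Hgt [|m] Hm; [lia|].
  pose proof (Tgk_f_gl_ray_bound g' gamma lam HB Hgamma Hlam0 HlamD (S m) 1) as Hray.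
  rewrite Cmult_1_l, Rmult_1_l in Hray.
  eapply Rle_trans; [apply Hray; lra|].
  rewrite <- Rpow_mult_distr.
  apply pow_succ_ratio_le; [|apply Rpower_gt0].
  pose proof (bloch_norm_ge0 g' HB). lra.
Qed.

Theorem lemma4p11 (g g' : C -> C) (gamma : R) (lam : C)
  (Hder : forall z : C, inD z -> is_derive (K := C_AbsRing) (V := C_NormedModule) g z (g' z))
  (HB : in_Bloch g')
  (Hgamma : 0 < gamma) (Hlam0 : lam <> RtoC 0) (HlamD : inD lam) :
  (forall (k : nat) (t : R), 0 <= t <= 1 ->
     Cmod (Tgk g' k (f_gl gamma lam) (Cmult (RtoC t) lam))
     <= bloch_norm g' ^ k /
        (Cmod lam ^ k * gamma ^ k * Rpower (1 - t * Cmod lam ^ 2) gamma))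
  /\
  (forall (n : nat) (a : nat -> C), gamma * Cmod lam > bloch_norm g' ->
     Cmod (sum_n (G := C_AbelianGroup)
             (fun k => Cmult (a k) (Tgk g' k (f_gl gamma lam) lam)) n)
     <= Cmod (a 0%nat) * (Cmod lam / Rpower (1 - Cmod lam ^ 2) gamma)
        + sum_n_m (G := R_AbelianGroup) (fun k => Cmod (a k)) 1 n
          * (bloch_norm g' / (Cmod lam * gamma * Rpower (1 - Cmod lam ^ 2) gamma))).
Proof.
  split.
  - exact (Tgk_f_gl_ray_bound g' gamma lam HB Hgamma Hlam0 HlamD).
  - intros n a Hgt. apply Cmod_sum_n_mult_le.
    + pose proof (Cmod_f_gl_ray gamma 1 lam ltac:(lra) HlamD) as Hf.
      rewrite Cmult_1_l, !Rmult_1_l in Hf.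
      cbn [Tgk]. rewrite Hf. apply Rle_refl.
    + exact (Tgk_f_gl_succ_bound g' gamma lam HB Hgamma Hlam0 HlamD Hgt).
Qed.
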